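(* Let $K$ be a field with $\operatorname{char}(K)\neq2$ and let $(M,N,(\cdot_1,\cdot_2),\partial,(\{-,-\},\langle-,-\rangle))$ be a braided crossed module of Leibniz $K$-algebras such that $\{n,n'\}=-\langle n',n\rangle$ for all $n,n'\in N$. Then $m\cdot_2n=-n\cdot_1m$ for all $m\in M$, $n\in N$, and $(M,N,\cdot_1,\partial,\{-,-\})$ is a braided crossed module of Lie $K$-algebras (in particular $M$ and $N$ are Lie $K$-algebras).
   Context: A Leibniz $K$-algebra: bilinear bracket with $[x,[y,z]]=[[x,y],z]-[[x,z],y]$. Leibniz action of $N$ on $M$: bilinear $\cdot_1\colon N\times M\to M$, $\cdot_2\colon M\times N\to M$ with $n\cdot_1[m,m']=[n\cdot_1m,m']-[n\cdot_1m',m]$; $[m,n\cdot_1m']=[m\cdot_2n,m']-[m,m']\cdot_2n$; $[m,m'\cdot_2n]=[m,m']\cdot_2n-[m\cdot_2n,m']$; $m\cdot_2[n,n']=(m\cdot_2n)\cdot_2n'-(m\cdot_2n')\cdot_2n$; $n\cdot_1(m\cdot_2n')=(n\cdot_1m)\cdot_2n'-[n,n']\cdot_1m$; $n\cdot_1(n'\cdot_1m)=[n,n']\cdot_1m-(n\cdot_1m)\cdot_2n'$. Crossed module of Leibniz algebras: such an action with a Leibniz homomorphism $\partial\colon M\to N$, $\partial(n\cdot_1m)=[n,\partial m]$, $\partial(m\cdot_2n)=[\partial m,n]$, $\partial(m)\cdot_1m'=[m,m']=m\cdot_2\partial(m')$. Braiding: bilinear $\{-,-\},\langle-,-\rangle\colon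 N\times N\to M$ with $\partial\{n,n'\}=[n,n']=\partial\langle n,n'\rangle$; $\{\partial m,\partial m'\}=[m,m']=\langle\partial m,\partial m'\rangle$; $\{\partial m,n\}=m\cdot_2n=\langle\partial m,n\rangle$; $\{n,\partial m\}=n\cdot_1m=\langle n,\partial m\rangle$; $\{n,[n',n'']\}=\{[n,n'],n''\}-\{[n,n''],n'\}$; $\langle n,[n',n'']\rangle=\{[n,n'],n''\}-\langle[n,n''],n'\rangle$; $\{n,[n',n'']\}=\{[n,n'],n''\}-\langle[n,n''],n'\rangle$; $\langle n,[n',n'']\rangle=\langle[n,n'],n''\rangle-\langle[n,n''],n'\rangle$. A Lie action of a Lie algebra $N$ on a Lie algebra $M$ is a bilinear $\cdot\colon N\times M\to M$ with $[n,n']\cdot m=n\cdot(n'\cdot m)-n'\cdot(n\cdot m)$ and $n\cdot[m,m']=[n\cdot m,m']+[m,n\cdot m']$. A crossed module of Lie algebras $(M,N,\cdot,\partial)$: Lie action and Lie homomorphism $\partial$ with $\partial(n\cdot m)=[n,\partial m]$ and $\partial(m)\cdot m'=[m,m']$. A braiding on it is a bilinear $\{-,-\}\colon N\times N\to M$ with $\partial\{n,n'\}=[n,n']$; $\{\partial m,\partial m'\}=[m,m']$; $\{\partial m,n\}=-n\cdot m$; $\{n,\partial m\}=n\cdot m$; $\{n,[n',n'']\}=\{[n,n'],n''\}-\{[n,n''],n'\}$; $\{[n,n'],n''\}=\{n,[n',n'']\}-\{n',[n,n'']\}$. *)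

From HB Require Import structures.
From mathcomp Require Import all_boot all_algebra.
Set Implicit Arguments. Unset Strict Implicit. Unset Printing Implicit Defensive.
Import GRing.Theory.
Local Open Scope ring_scope.

Section Defs.
Variable K : fieldType.

Definition is_linear (U V : lmodType K) (f : U -> V) : Prop :=
  forall (a : K) (x y : U), f (a *: x + y) = a *: f x + f y.

Definition is_bilinear (U V W : lmodType K) (f : U -> V -> W) : Prop :=
  (forall (a : K) (x x' : U) (y : V), f (a *: x + x') y = a *: f x y + f x' y) /\
  (forall (a : K) (x : U) (y y' : V), f x (a *: y + y') = a *: f x y + f x y').

Definition is_leibniz_algebra (V : lmodType K) (br : V -> V -> V) : Prop :=
  is_bilinear br /\
  forall x y z, br x (br y z) = br (br x y) z - br (br x z) y.

Definition is_lie_algebra (V : lmodType K) (br : V -> V -> V) : Prop :=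
  [/\ is_bilinear br,
      (forall x, br x x = 0) &
      (forall x y z, br x (br y z) + br y (br z x) + br z (br x y) = 0)].

Section Leibniz.
Variables (M N : lmodType K) (bM : M -> M -> M) (bN : N -> N -> N).

Definition is_leibniz_hom (d : M -> N) : Prop :=
  is_linear d /\ forall m m', d (bM m m') = bN (d m) (d m').

Definition is_leibniz_action (act1 : N -> M -> M) (act2 : M -> N -> M) : Prop :=
  is_bilinear act1 /\ is_bilinear act2 /\
   (forall n m m', act1 n (bM m m') = bM (act1 n m) m' - bM (act1 n m') m) /\
   (forall m n m', bM m (act1 n m') = bM (act2 m n) m' - act2 (bM m m') n) /\
   (forall m m' n, bM m (act2 m' n) = act2 (bM m m') n - bM (act2 m n) m') /\
   (forall m n n', act2 m (bN n n') = act2 (act2 m n) n' - act2 (act2 m n') n) /\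
   (forall n m n', act1 n (act2 m n') = act2 (act1 n m) n' - act1 (bN n n') m) /\
   (forall n n' m, act1 n (act1 n' m) = act1 (bN n n') m - act2 (act1 n m) n').

Definition is_leibniz_crossed_module (act1 : N -> M -> M) (act2 : M -> N -> M)
    (d : M -> N) : Prop :=
  is_leibniz_algebra bM /\ is_leibniz_algebra bN /\
  is_leibniz_action act1 act2 /\ is_leibniz_hom d /\
  (forall n m, d (act1 n m) = bN n (d m)) /\
  (forall m n, d (act2 m n) = bN (d m) n) /\
  (forall m m', act1 (d m) m' = bM m m' /\ bM m m' = act2 m (d m')).

Definition is_leibniz_braiding (act1 : N -> M -> M) (act2 : M -> N -> M)
    (d : M -> N) (br1 br2 : N -> N -> M) : Prop :=
  is_bilinear br1 /\ is_bilinear br2 /\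
   (forall n n', d (br1 n n') = bN n n' /\ bN n n' = d (br2 n n')) /\
   (forall m m', br1 (d m) (d m') = bM m m' /\ bM m m' = br2 (d m) (d m')) /\
   (forall m n, br1 (d m) n = act2 m n /\ act2 m n = br2 (d m) n) /\
   (forall n m, br1 n (d m) = act1 n m /\ act1 n m = br2 n (d m)) /\
   forall n n' n'',
     [/\ br1 n (bN n' n'') = br1 (bN n n') n'' - br1 (bN n n'') n',
         br2 n (bN n' n'') = br1 (bN n n') n'' - br2 (bN n n'') n',
         br1 n (bN n' n'') = br1 (bN n n') n'' - br2 (bN n n'') n' &
         br2 n (bN n' n'') = br2 (bN n n') n'' - br2 (bN n n'') n'].

Definition is_braided_leibniz_crossed_module (act1 : N -> M -> M)
    (act2 : M -> N -> M) (d : M -> N) (br1 br2 : N -> N -> M) : Prop :=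
  is_leibniz_crossed_module act1 act2 d /\ is_leibniz_braiding act1 act2 d br1 br2.

Definition is_lie_hom (d : M -> N) : Prop :=
  is_linear d /\ forall m m', d (bM m m') = bN (d m) (d m').

Definition is_lie_action (act : N -> M -> M) : Prop :=
  [/\ is_bilinear act,
      (forall n n' m, act (bN n n') m = act n (act n' m) - act n' (act n m)) &
      (forall n m m', act n (bM m m') = bM (act n m) m' + bM m (act n m'))].

Definition is_lie_crossed_module (act : N -> M -> M) (d : M -> N) : Prop :=
  is_lie_algebra bM /\ is_lie_algebra bN /\ is_lie_action act /\ is_lie_hom d /\
      (forall n m, d (act n m) = bN n (d m)) /\
      (forall m m', act (d m) m' = bM m m').

Definition is_lie_braiding (act : N -> M -> M) (d : M -> N) (br : N -> N -> M) : Prop :=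
  is_bilinear br /\
   (forall n n', d (br n n') = bN n n') /\
   (forall m m', br (d m) (d m') = bM m m') /\
   (forall m n, br (d m) n = - act n m) /\
   (forall n m, br n (d m) = act n m) /\
   (forall n n' n'', br n (bN n' n'') = br (bN n n') n'' - br (bN n n'') n') /\
   (forall n n' n'', br (bN n n') n'' = br n (bN n' n'') - br n' (bN n n'')).

Definition is_braided_lie_crossed_module (act : N -> M -> M) (d : M -> N)
    (br : N -> N -> M) : Prop :=
  is_lie_crossed_module act d /\ is_lie_braiding act d br.

End Leibniz.
End Defs.

(* The symmetry [br1 n n' = - br2 n' n] transports through the braiding axioms
   [{∂m, n} = m ·2 n], [⟨n, ∂m⟩ = n ·1 m], [{∂m, ∂m'} = [m, m'] = ⟨∂m, ∂m'⟩] and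
   [∂{n, n'} = [n, n'] = ∂⟨n, n'⟩] to give [m ·2 n = - n ·1 m] and the
   anticommutativity of both brackets.  Since char K ≠ 2, anticommutativity makes
   the brackets alternating, and for an anticommutative bracket the Leibniz
   identity is the Jacobi identity.  The remaining Lie axioms are the Leibniz
   ones rewritten with [·2 = - ·1]; the second Lie braiding identity comes from
   comparing the first and third Leibniz braiding identities, which shows that
   [{-,-}] and [⟨-,-⟩] agree on brackets in their first argument. *)

From HB Require Import structures.
From mathcomp Require Import all_boot all_algebra.
Set Implicit Arguments. Unset Strict Implicit. Unset Printing Implicit Defensive.
Import GRing.Theory.
Local Open Scope ring_scope.

Section LinearAlgebra.
Variable K : fieldType.

Lemma fixed_oppr_eq0 (V : lmodType K) (x : V) :
  (2%:R : K) != 0 -> x = - x -> x = 0.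
Proof.
move=> two_neq0 xN.
have two_x : (2%:R : K) *: x = 0 by rewrite scaler_nat mulr2n {1}xN addNr.
by rewrite -[x]scale1r -(mulVf two_neq0) -scalerA two_x scaler0.
Qed.

Lemma is_linearN (U V : lmodType K) (f : U -> V) :
  is_linear f -> forall x, f (- x) = - f x.
Proof.
move=> f_lin x.
have f0 : f 0 = 0.
  have := f_lin 1 0 0; rewrite scaler0 addr0 scale1r => f0_double.
  by apply/(addrI (f 0)); rewrite addr0 -f0_double.
by have := f_lin (-1) x 0; rewrite addr0 f0 addr0 !scaleN1r.
Qed.

Lemma is_bilinear_linearr (U V W : lmodType K) (f : U -> V -> W) (x : U) :
  is_bilinear f -> is_linear (f x).
Proof. by move=> [_ f_linr] a y y'; apply: f_linr. Qed.

Lemma anticomm_leibniz_is_lie (V : lmodType K) (br : V -> V -> V) :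
  (2%:R : K) != 0 -> is_leibniz_algebra br ->
  (forall x y, br x y = - br y x) -> is_lie_algebra br.
Proof.
move=> two_neq0 [br_bilin leibniz] anticomm; split=> // [x | x y z].
  exact: fixed_oppr_eq0 two_neq0 (anticomm x x).
have brN u v : br u (- v) = - br u v by apply/is_linearN/is_bilinear_linearr.
rewrite leibniz [br (br x z) y]anticomm [br (br x y) z]anticomm [br z x]anticomm.
by rewrite brN opprK addrK addNr.
Qed.

Lemma anticomm_leibniz_action_is_lie (M N : lmodType K)
    (bM : M -> M -> M) (bN : N -> N -> N)
    (act1 : N -> M -> M) (act2 : M -> N -> M) :
  is_leibniz_action bM bN act1 act2 ->
  (forall m m', bM m m' = - bM m' m) ->
  (forall m n, act2 m n = - act1 n m) ->
  is_lie_action bM bN act1.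
Proof.
move=> [bil1 [_ [act1_bM [_ [_ [_ [_ act1_act1]]]]]]] bM_anticomm act2E.
split=> // [n n' m | n m m'].
  by rewrite act1_act1 act2E opprK addrK.
by rewrite act1_bM [bM (act1 n m') m]bM_anticomm opprK.
Qed.

End LinearAlgebra.

Section BraidedLeibnizCrossedModule.
Variables (K : fieldType) (M N : lmodType K).
Variables (bM : M -> M -> M) (bN : N -> N -> N).
Variables (act1 : N -> M -> M) (act2 : M -> N -> M) (d : M -> N).
Variables (br1 br2 : N -> N -> M).
Hypothesis crossed : is_leibniz_crossed_module bM bN act1 act2 d.
Hypothesis braiding : is_leibniz_braiding bM bN act1 act2 d br1 br2.
Hypothesis br_sym : forall n n', br1 n n' = - br2 n' n.

Let d_br n n' : d (br1 n n') = bN n n' /\ bN n n' = d (br2 n n') :=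
  braiding.2.2.1 n n'.
Let br_dd m m' : br1 (d m) (d m') = bM m m' /\ bM m m' = br2 (d m) (d m') :=
  braiding.2.2.2.1 m m'.
Let br_dl m n : br1 (d m) n = act2 m n /\ act2 m n = br2 (d m) n :=
  braiding.2.2.2.2.1 m n.
Let br_dr n m : br1 n (d m) = act1 n m /\ act1 n m = br2 n (d m) :=
  braiding.2.2.2.2.2.1 n m.
Let br_bracket n n' n'' :
  [/\ br1 n (bN n' n'') = br1 (bN n n') n'' - br1 (bN n n'') n',
      br2 n (bN n' n'') = br1 (bN n n') n'' - br2 (bN n n'') n',
      br1 n (bN n' n'') = br1 (bN n n') n'' - br2 (bN n n'') n' &
      br2 n (bN n' n'') = br2 (bN n n') n'' - br2 (bN n n'') n'] :=
  braiding.2.2.2.2.2.2 n n' n''.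

Lemma act2_opp_act1 m n : act2 m n = - act1 n m.
Proof. by rewrite -(br_dl m n).1 br_sym (br_dr n m).2. Qed.

Lemma bM_anticomm m m' : bM m m' = - bM m' m.
Proof. by rewrite -(br_dd m m').1 br_sym (br_dd m' m).2. Qed.

Lemma bN_anticomm n n' : bN n n' = - bN n' n.
Proof.
rewrite -(d_br n n').1 br_sym is_linearN ?(d_br n' n).2 //.
exact: crossed.2.2.2.1.1.
Qed.

Lemma br1_br2_bracketl n n' n'' : br1 (bN n n') n'' = br2 (bN n n') n''.
Proof.
have [br1_r _ br1_mixed _] := br_bracket n n'' n'.
by move: br1_mixed; rewrite br1_r => /addrI /oppr_inj.
Qed.

Lemma br1_bracketl n n' n'' :
  br1 (bN n n') n'' = br1 n (bN n' n'') - br1 n' (bN n n'').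
Proof.
have [br1_r _ _ _] := br_bracket n n' n''.
by rewrite br1_r (br_sym n') -br1_br2_bracketl opprK subrK.
Qed.

Lemma leibniz_braiding_is_lie : is_lie_braiding bM bN act1 d br1.
Proof.
split; first exact: braiding.1.
split; first by move=> n n'; rewrite (d_br n n').1.
split; first by move=> m m'; rewrite (br_dd m m').1.
split; first by move=> m n; rewrite (br_dl m n).1 act2_opp_act1.
split; first by move=> n m; rewrite (br_dr n m).1.
split; last exact: br1_bracketl.
by move=> n n' n''; have [] := br_bracket n n' n''.
Qed.

Hypothesis two_neq0 : (2%:R : K) != 0.

Lemma leibniz_crossed_module_is_lie : is_lie_crossed_module bM bN act1 d.
Proof.
have [bM_leib [bN_leib [action [d_hom [d_act1 [_ d_bM]]]]]] := crossed.
split; first exact: anticomm_leibniz_is_lie bM_anticomm.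
split; first exact: anticomm_leibniz_is_lie bN_anticomm.
split; first exact: anticomm_leibniz_action_is_lie bM_anticomm act2_opp_act1.
by split=> //; split=> // m m'; rewrite (d_bM m m').1.
Qed.

End BraidedLeibnizCrossedModule.

Theorem mainTheorem5 (K : fieldType) (M N : lmodType K)
    (bM : M -> M -> M) (bN : N -> N -> N)
    (act1 : N -> M -> M) (act2 : M -> N -> M) (d : M -> N)
    (br1 br2 : N -> N -> M) :
  (2%:R : K) != 0 ->
  is_braided_leibniz_crossed_module bM bN act1 act2 d br1 br2 ->
  (forall n n' : N, br1 n n' = - br2 n' n) ->
  (forall (m : M) (n : N), act2 m n = - act1 n m) /\
  is_braided_lie_crossed_module bM bN act1 d br1.
Proof.
move=> two_neq0 [crossed braiding] br_sym.
split; first exact: act2_opp_act1 braiding br_sym.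
split; first exact: leibniz_crossed_module_is_lie crossed braiding br_sym two_neq0.
exact: leibniz_braiding_is_lie braiding br_sym.
Qed.
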